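(* Let $P(z)=z^2$ and let $K>1$. There exists $\theta_0=\theta_0(K)>0$ such that for all $\theta\in(0,\theta_0)$ the boundaries of $P(D((-1,1);\theta))$ and of $D((-K,1);\theta)$ intersect each other exactly in a point $Z(K,\theta)$ of the upper half-plane and its complex conjugate. Furthermore $Z(K,\theta)\to K^2$ as $\theta\to0$. Hence the difference $\Delta(K,\theta)=D((-K,1);\theta)\setminus P(D((-1,1);\theta))$ tends to the interval $[1,K^2]$ as $\theta\to0$.
   Context: For a bounded open real interval $J=(a,b)$ and $\theta\in(0,\pi/2]$, the Poincaré neighbourhood $D(J;\theta)$ is the union of $J$ with the set of $z\in\mathbb C\setminus\mathbb R$ from which $J$ is seen under an angle greater than $\theta$ (i.e. the angle at $z$ between the segments $[z,a]$ and $[z,b]$ exceeds $\theta$); equivalently, it is the union of the two open Euclidean discs, symmetric with respect to $\mathbb R$, whose boundary circles pass through $a$ and $b$ and meet the real line at angle $\theta$. For $\theta=\pi/2$ it is the Euclidean disc with diameter $J$. *)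

From Stdlib Require Import Reals.
From Coquelicot Require Import Coquelicot.
Open Scope R_scope.

Definition angle_at (z : C) (a b : R) : R :=
  let u := Cminus (RtoC a) z in
  let v := Cminus (RtoC b) z in
  acos (Re (Cmult u (Cconj v)) / (Cmod u * Cmod v)).

Definition poincare_nbhd (a b theta : R) (z : C) : Prop :=
  (Im z = 0 /\ a < Re z < b) \/ (Im z <> 0 /\ theta < angle_at z a b).

Definition Psq (z : C) : C := Cmult z z.

Definition image_set (f : C -> C) (S : C -> Prop) (w : C) : Prop :=
  exists z, S z /\ w = f z.

Definition boundary (S : C -> Prop) (w : C) : Prop :=
  forall eps, 0 < eps ->
    (exists u, Cmod (Cminus u w) < eps /\ S u) /\
    (exists u, Cmod (Cminus u w) < eps /\ ~ S u).

Definition DeltaKT (K theta : R) (w : C) : Prop :=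
  poincare_nbhd (- K) 1 theta w /\ ~ image_set Psq (poincare_nbhd (-1) 1 theta) w.

(** With [t = cot θ], the Poincaré neighbourhood D((a,b);θ) is the sublevel set
    [{phi a b t < 0}], and P(D((-1,1);θ)) is [{phi_sq t < 0}], where
    [phi_sq t ((s+iy)^2) = s^2 + y^2 - 1 - 2ty] for [s, y >= 0].  Everything rests on
    the factorisation [phiK_Psq_factor]:
      [phi (-K) 1 t ((s+iy)^2) = (1+K) s (s^2+y^2-1-2ty) - ((s-1)^2+y^2) ((K-s)(s+1)-y^2)].
    The boundaries lie in the zero sets of these continuous functions, so a common
    boundary point [(s+iy)^2] has [s + iy = 1] or [(K-s)(s+1) = y^2]; together with
    [s^2+y^2-1 = 2ty] the latter has a unique solution, whose square is Z.  Conversely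
    1, Z and its conjugate lie on both boundaries, since each defining function changes
    sign along a short segment through them.
    At Z, [y = O(1/t) = O(θ)] and [K - s <= y^2], so Z tends to K^2.  On Δ the
    factorisation forces [(K-s)(s+1) > y^2] and [2ty <= s^2+y^2-1 < K^2], so Δ lies within
    O(θ) of [1,K^2]; conversely the points [(s+iy)^2] with [1 < s < K] and [2ty = s^2-1]
    lie in Δ and cover [1,K^2] up to O(θ). *)

From Stdlib Require Import Reals Lra Psatz.
From Coquelicot Require Import Coquelicot.
Open Scope R_scope.

Lemma Cmod_le_abs_sum (a b : R) : Cmod (a, b) <= Rabs a + Rabs b.
Proof.
  replace (a, b) with (RtoC a + RtoC b * Ci)%C
    by (apply injective_projections; simpl; ring).
  eapply Rle_trans; [apply Cmod_triangle|].
  rewrite Cmod_mult, Cmod_Ci, !Cmod_R. lra.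
Qed.

Lemma Psq_pair (p q : R) : Psq (p, q) = (p ^ 2 - q ^ 2, 2 * p * q).
Proof. apply injective_projections; simpl; ring. Qed.

Lemma Cconj_Psq (p q : R) : Cconj (Psq (p, q)) = Psq (p, - q).
Proof. rewrite !Psq_pair. apply injective_projections; simpl; ring. Qed.

Lemma Psq_nonneg_cases (w : C) :
  exists s y, 0 <= s /\ 0 <= y /\ (w = Psq (s, y) \/ w = Cconj (Psq (s, y))).
Proof.
  destruct w as [X Y].
  assert (HX : Rabs X <= Cmod (X, Y)) by apply (re_le_Cmod (X, Y)).
  assert (Hmod : Cmod (X, Y) ^ 2 = X ^ 2 + Y ^ 2) by apply Cmod2_alt.
  assert (Hp : 0 <= (Cmod (X, Y) + X) / 2) by (apply Rabs_le_between in HX; lra).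
  assert (Hm : 0 <= (Cmod (X, Y) - X) / 2) by (apply Rabs_le_between in HX; lra).
  exists (sqrt ((Cmod (X, Y) + X) / 2)), (sqrt ((Cmod (X, Y) - X) / 2)).
  split; [apply sqrt_pos|]. split; [apply sqrt_pos|].
  assert (Hsq : Psq (sqrt ((Cmod (X, Y) + X) / 2), sqrt ((Cmod (X, Y) - X) / 2)) = (X, Rabs Y)).
  { rewrite Psq_pair, !pow2_sqrt by assumption.
    rewrite Rmult_assoc, <- sqrt_mult by assumption.
    replace ((Cmod (X, Y) + X) / 2 * ((Cmod (X, Y) - X) / 2)) with (Rsqr (Y / 2))
      by (unfold Rsqr; nra).
    rewrite sqrt_Rsqr_abs, Rabs_div, (Rabs_right 2) by lra.
    apply injective_projections; simpl; field. }
  rewrite Hsq. destruct (Rle_or_lt 0 Y) as [HY | HY].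
  - left. now rewrite Rabs_right by lra.
  - right. rewrite Rabs_left by lra. unfold Cconj; simpl. now rewrite Ropp_involutive.
Qed.

Lemma Cmod_Psq_sub_real (s y x : R) :
  0 <= s -> 0 <= y ->
  Cmod (Cminus (Psq (s, y)) (RtoC x)) <= Rabs (s ^ 2 - y ^ 2 - x) + 2 * s * y.
Proof.
  intros Hs Hy. rewrite Psq_pair.
  replace (Cminus (s ^ 2 - y ^ 2, 2 * s * y) (RtoC x)) with (s ^ 2 - y ^ 2 - x, 2 * s * y)
    by (apply injective_projections; simpl; ring).
  eapply Rle_trans; [apply Cmod_le_abs_sum|]. rewrite (Rabs_right (2 * s * y)) by nra. lra.
Qed.

Lemma Cmod_Cconj_sub_real (u : C) (x : R) :
  Cmod (Cminus (Cconj u) (RtoC x)) = Cmod (Cminus u (RtoC x)).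
Proof.
  rewrite <- Cmod_conj. f_equal. apply injective_projections; simpl; ring.
Qed.

(** * Poincaré neighbourhoods as sublevel sets *)

Definition cot (th : R) : R := cos th / sin th.

Definition phi (a b t : R) (z : C) : R :=
  (fst z - a) * (fst z - b) + snd z ^ 2 - (b - a) * t * Rabs (snd z).

Lemma acos_gt_iff (c th : R) :
  -1 <= c <= 1 -> 0 <= th <= PI -> (th < acos c <-> c < cos th).
Proof.
  intros Hc Hth. pose proof (acos_bound c). split; intro Hlt.
  - rewrite <- (cos_acos c Hc). apply cos_decreasing_1; lra.
  - destruct (Rlt_or_le th (acos c)) as [Hgt | Hle]; [exact Hgt|].
    rewrite <- (cos_acos c Hc) in Hlt.
    pose proof (cos_decr_1 (acos c) th ltac:(lra) ltac:(lra) ltac:(lra) ltac:(lra) Hle). lra.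
Qed.

Lemma lt_mul_cos_iff (Q L M c s : R) :
  0 < L -> 0 < M -> M ^ 2 = Q ^ 2 + L ^ 2 -> 0 < s -> 0 < c -> s ^ 2 + c ^ 2 = 1 ->
  (Q < M * c <-> Q * s < L * c).
Proof.
  intros HL HM HMQ Hs Hc Hsc.
  assert (HMc : 0 < M * c) by nra. assert (HLc : 0 < L * c) by nra.
  destruct (Rle_or_lt Q 0) as [HQ | HQ]; [split; intros _; nra|].
  assert (Hsq : (M * c) ^ 2 - Q ^ 2 = (L * c) ^ 2 - (Q * s) ^ 2).
  { rewrite !Rpow_mult_distr, HMQ. replace (s ^ 2) with (1 - c ^ 2) by lra. ring. }
  assert (HQs : 0 < Q * s) by nra.
  split; intro H.
  - assert (0 < (M * c) ^ 2 - Q ^ 2) by nra. nra.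
  - assert (0 < (L * c) ^ 2 - (Q * s) ^ 2) by nra. nra.
Qed.

Lemma poincare_nbhd_iff (a b th : R) (z : C) :
  a < b -> 0 < th < PI / 2 -> poincare_nbhd a b th z <-> phi a b (cot th) z < 0.
Proof.
  intros Hab Hth. destruct z as [x y]. unfold poincare_nbhd, phi, cot, angle_at; simpl.
  assert (Hs : 0 < sin th) by (apply sin_gt_0; lra).
  assert (Hc : 0 < cos th) by (apply cos_gt_0; lra).
  assert (Hsc : sin th ^ 2 + cos th ^ 2 = 1) by (rewrite <- (sin2_cos2 th); unfold Rsqr; ring).
  destruct (Req_dec y 0) as [-> | Hy].
  { rewrite Rabs_R0. split.
    - intros [[_ H] | [H _]]; [nra | lra].
    - intro H. left. split; [reflexivity | nra]. }
  set (Q := (x - a) * (x - b) + y ^ 2).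
  set (M := Cmod (RtoC a - (x, y))%C * Cmod (RtoC b - (x, y))%C).
  assert (HyL : 0 < (b - a) * Rabs y) by (apply Rmult_lt_0_compat; [lra | now apply Rabs_pos_lt]).
  assert (HMQ : M ^ 2 = Q ^ 2 + ((b - a) * Rabs y) ^ 2).
  { unfold M, Q. rewrite !Rpow_mult_distr, !Cmod2_alt, pow2_abs.
    simpl. ring. }
  assert (HM : 0 < M).
  { assert (0 <= M) by (apply Rmult_le_pos; apply Cmod_ge_0). nra. }
  assert (HQM : -1 <= Q / M <= 1).
  { split; [apply Rle_div_r | apply Rle_div_l]; nra. }
  replace ((a + - x) * (b + - x) - (0 + - y) * - (0 + - y)) with Q by (unfold Q; ring).
  replace (y * (y * 1)) with (y ^ 2) by ring. fold Q.
  rewrite (acos_gt_iff (Q / M) th HQM) by lra.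
  rewrite Rlt_div_l, Rmult_comm, (lt_mul_cos_iff Q _ M _ _ HyL HM HMQ Hs Hc), Rlt_div_r by lra.
  replace ((b - a) * (cos th / sin th) * Rabs y) with ((b - a) * Rabs y * cos th / sin th)
    by (field; lra).
  unfold Q. split.
  - intros [[H _] | [_ H]]; [contradiction | lra].
  - intro H. right. split; [exact Hy | lra].
Qed.

Lemma phi_Cconj (a b t : R) (w : C) : phi a b t (Cconj w) = phi a b t w.
Proof. unfold phi, Cconj; simpl. rewrite Rabs_Ropp. ring. Qed.

Definition phi_sq (t : R) (w : C) : R :=
  Cmod w - 1 - 2 * t * sqrt ((Cmod w - fst w) / 2).

Lemma phi_sq_Psq (t : R) (z : C) : phi_sq t (Psq z) = phi (-1) 1 t z.
Proof.
  destruct z as [p q].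
  assert (Hmod : Cmod (Psq (p, q)) = p ^ 2 + q ^ 2).
  { unfold Psq. rewrite Cmod_mult. transitivity (Cmod (p, q) ^ 2); [ring | apply Cmod2_alt]. }
  unfold phi_sq, phi. rewrite Hmod, Psq_pair; cbn [fst snd].
  replace ((p ^ 2 + q ^ 2 - (p ^ 2 - q ^ 2)) / 2) with (Rsqr q) by (unfold Rsqr; field).
  rewrite sqrt_Rsqr_abs. ring.
Qed.

Lemma phi_sq_Cconj (t : R) (w : C) : phi_sq t (Cconj w) = phi_sq t w.
Proof. unfold phi_sq. rewrite Cmod_conj. reflexivity. Qed.

Lemma image_nbhd_iff (th : R) (w : C) :
  0 < th < PI / 2 ->
  image_set Psq (poincare_nbhd (-1) 1 th) w <-> phi_sq (cot th) w < 0.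
Proof.
  intro Hth. split.
  - intros [z [Hz ->]]. rewrite phi_sq_Psq, <- poincare_nbhd_iff by lra. exact Hz.
  - intro Hw. destruct (Psq_nonneg_cases w) as [s [y [_ [_ [-> | ->]]]]].
    + exists (s, y). rewrite poincare_nbhd_iff, <- phi_sq_Psq by lra. split; [exact Hw | reflexivity].
    + rewrite Cconj_Psq in Hw |- *. exists (s, - y).
      rewrite poincare_nbhd_iff, <- phi_sq_Psq by lra. split; [exact Hw | reflexivity].
Qed.

Lemma phi_unit_nonneg_im (t s y : R) :
  0 <= y -> phi (-1) 1 t (s, y) = s ^ 2 + y ^ 2 - 1 - 2 * t * y.
Proof. intro Hy. unfold phi; simpl. rewrite Rabs_right by lra. ring. Qed.

Lemma phiK_Psq_factor (K t s y : R) :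
  0 <= s -> 0 <= y ->
  phi (- K) 1 t (Psq (s, y)) =
  (1 + K) * s * phi (-1) 1 t (s, y) - ((s - 1) ^ 2 + y ^ 2) * ((K - s) * (s + 1) - y ^ 2).
Proof.
  intros Hs Hy. rewrite phi_unit_nonneg_im by exact Hy.
  unfold phi. rewrite Psq_pair; simpl. rewrite Rabs_right by nra. ring.
Qed.

(** * Boundaries of sublevel sets *)

Lemma continuous_Cmod (w : C) : continuous Cmod w.
Proof. exact (filterlim_norm (K := C_AbsRing) (V := C_NormedModule) w). Qed.

(* Dispatch on the head symbol: applying [continuous_mult] blindly makes unification
   unfold [Rminus] and diverge. *)
Ltac solve_continuous :=
  repeat match goal with
  | |- continuous (fun z => @?f z - @?g z) _ =>
      apply (continuous_minus (K := R_AbsRing) (V := R_NormedModule) f g)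
  | |- continuous (fun z => @?f z + @?g z) _ =>
      apply (continuous_plus (K := R_AbsRing) (V := R_NormedModule) f g)
  | |- continuous (fun z => @?f z * @?g z) _ =>
      apply (continuous_mult (K := R_AbsRing) f g)
  | |- continuous (fun z => sqrt (@?f z)) _ =>
      apply (continuous_comp f sqrt); [| apply continuous_sqrt]
  | |- continuous (fun z => Rabs (@?f z)) _ =>
      apply (continuous_comp f Rabs); [| apply continuous_Rabs]
  | |- continuous (fun z => Cmod z) _ => apply continuous_Cmod
  | |- continuous (fun z => fst z) (_, _) => apply continuous_fst
  | |- continuous (fun z => snd z) (_, _) => apply continuous_snd
  | |- continuous (fun _ => _) _ => apply continuous_const
  end.

Lemma continuous_phi (a b t : R) (w : C) : continuous (phi a b t) w.
Proof. destruct w. unfold phi. cbn [pow]. solve_continuous. Qed.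

Lemma continuous_phi_sq (t : R) (w : C) : continuous (phi_sq t) w.
Proof. destruct w. unfold phi_sq, Rdiv. solve_continuous. Qed.

Lemma continuous_Cmod_ball (f : C -> R) (w : C) :
  continuous f w -> forall e, 0 < e ->
  exists d, 0 < d /\ forall u, Cmod (Cminus u w) < d -> Rabs (f u - f w) < e.
Proof.
  intros Hf e He.
  destruct (locally_norm_le_locally (K := C_AbsRing) (V := C_NormedModule) w
              (fun u => ball (f w) e (f u)) (Hf _ (locally_ball (f w) (mkposreal e He))))
    as [d Hd].
  exists d. split; [apply cond_pos | exact Hd].
Qed.

Lemma boundary_iff (S S' : C -> Prop) (w : C) :
  (forall u, S u <-> S' u) -> (boundary S w <-> boundary S' w).
Proof.
  intro HS. split; intros Hb e He; destruct (Hb e He) as [[u [Hu Su]] [v [Hv Sv]]];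
    split; [exists u | exists v | exists u | exists v]; rewrite ?HS in *; auto.
Qed.

Lemma boundary_sublevel_eq0 (S : C -> Prop) (f : C -> R) (w : C) :
  (forall u, S u <-> f u < 0) -> continuous f w -> boundary S w -> f w = 0.
Proof.
  intros HS Hf Hb.
  destruct (Req_dec (f w) 0) as [Heq | Hne]; [exact Heq | exfalso].
  destruct (continuous_Cmod_ball f w Hf (Rabs (f w)) (Rabs_pos_lt _ Hne)) as [d [Hd Hnear]].
  destruct (Hb d Hd) as [[u [Hu Su]] [v [Hv Sv]]].
  apply HS in Su. rewrite HS in Sv.
  specialize (Hnear u Hu) as Hu'. specialize (Hnear v Hv) as Hv'.
  destruct (Rlt_or_le (f w) 0) as [Hlt | Hle].
  - rewrite (Rabs_left (f w)) in Hv' by lra. apply Rabs_def2 in Hv'. lra.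
  - rewrite (Rabs_right (f w)) in Hu' by lra. apply Rabs_def2 in Hu'. lra.
Qed.

Lemma boundary_of_segment (S : C -> Prop) (x y a b d0 : R) :
  0 < d0 ->
  (forall d, 0 < d < d0 -> S (x - d * a, y - d * b) /\ ~ S (x + d * a, y + d * b)) ->
  boundary S (x, y).
Proof.
  intros Hd0 Hseg e He.
  set (L := Rabs a + Rabs b).
  assert (HL : 0 <= L) by (unfold L; pose proof (Rabs_pos a); pose proof (Rabs_pos b); lra).
  set (d := Rmin (d0 / 2) (e / (2 * (L + 1)))).
  assert (Hd : 0 < d < d0).
  { unfold d. split; [apply Rmin_pos; apply Rdiv_lt_0_compat; lra|].
    eapply Rle_lt_trans; [apply Rmin_l | lra]. }
  assert (HdL : d * L < e).
  { assert (d * (2 * (L + 1)) <= e) by (apply Rle_div_r; [lra | apply Rmin_r]). nra. }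
  assert (Hclose : forall sg, Rabs sg = 1 ->
            Cmod (Cminus (x + sg * (d * a), y + sg * (d * b)) (x, y)) < e).
  { intros sg Hsg.
    replace (Cminus (x + sg * (d * a), y + sg * (d * b)) (x, y)) with (sg * (d * a), sg * (d * b))
      by (apply injective_projections; simpl; ring).
    eapply Rle_lt_trans; [apply Cmod_le_abs_sum|].
    rewrite !Rabs_mult, Hsg, (Rabs_right d) by lra. unfold L in HdL. lra. }
  destruct (Hseg d Hd) as [Hin Hout].
  split; [exists (x - d * a, y - d * b) | exists (x + d * a, y + d * b)]; split; auto.
  - replace (x - d * a, y - d * b) with (x + -1 * (d * a), y + -1 * (d * b))
      by (apply injective_projections; simpl; ring).
    apply Hclose. rewrite Rabs_left by lra. ring.
  - replace (x + d * a, y + d * b) with (x + 1 * (d * a), y + 1 * (d * b))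
      by (apply injective_projections; simpl; ring).
    apply Hclose. apply Rabs_R1.
Qed.

Lemma boundary_Psq (S : C -> Prop) (z : C) :
  boundary (fun u => S (Psq u)) z -> boundary S (Psq z).
Proof.
  intros Hb e He.
  assert (Hz : 0 <= Cmod z) by apply Cmod_ge_0.
  set (d := Rmin 1 (e / (2 * Cmod z + 1))).
  assert (Hd : 0 < d) by (apply Rmin_pos; [lra | apply Rdiv_lt_0_compat; lra]).
  assert (Hnear : forall u, Cmod (Cminus u z) < d -> Cmod (Cminus (Psq u) (Psq z)) < e).
  { intros u Hu.
    replace (Cminus (Psq u) (Psq z)) with (Cminus u z * (Cminus u z + 2 * z))%C
      by (unfold Psq, Cminus; ring).
    rewrite Cmod_mult.
    assert (Hsum : Cmod (Cminus u z + 2 * z)%C <= d + 2 * Cmod z).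
    { eapply Rle_trans; [apply Cmod_triangle|].
      rewrite Cmod_mult, Cmod_R, Rabs_right by lra. lra. }
    assert (Hd1 : d <= 1) by apply Rmin_l.
    assert (Hde : d * (2 * Cmod z + 1) <= e) by (apply Rle_div_r; [lra | apply Rmin_r]).
    pose proof (Cmod_ge_0 (Cminus u z)). pose proof (Cmod_ge_0 (Cminus u z + 2 * z)%C). nra. }
  destruct (Hb d Hd) as [[u [Hu Su]] [v [Hv Sv]]].
  split; [exists (Psq u) | exists (Psq v)]; auto.
Qed.

Lemma boundary_Cconj (S : C -> Prop) (w : C) :
  (forall u, S (Cconj u) <-> S u) -> boundary S w -> boundary S (Cconj w).
Proof.
  intros HS Hb e He. destruct (Hb e He) as [[u [Hu Su]] [v [Hv Sv]]].
  assert (Hmod : forall u, Cmod (Cminus (Cconj u) (Cconj w)) = Cmod (Cminus u w)).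
  { intro u'. rewrite <- Cmod_conj. f_equal. apply injective_projections; simpl; ring. }
  split; [exists (Cconj u) | exists (Cconj v)]; rewrite Hmod, HS; auto.
Qed.

Lemma boundary_phi_sq_Psq (t s q : R) :
  0 < s -> phi (-1) 1 t (s, q) = 0 -> boundary (fun w => phi_sq t w < 0) (Psq (s, q)).
Proof.
  intros Hs H0. apply boundary_Psq, (boundary_of_segment _ s q 1 0 (2 * s)); [lra|].
  intros d Hd. rewrite !phi_sq_Psq. unfold phi in *; cbn [fst snd] in *.
  replace (q - d * 0) with q by ring. replace (q + d * 0) with q by ring.
  split; nra.
Qed.

Lemma boundary_phiK_one (K t : R) :
  1 < K -> boundary (fun w => phi (- K) 1 t w < 0) (1, 0).
Proof.
  intro HK. apply (boundary_of_segment _ 1 0 1 0 (1 + K)); [lra|].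
  intros d Hd. unfold phi; cbn [fst snd].
  replace (0 - d * 0) with 0 by ring. replace (0 + d * 0) with 0 by ring.
  rewrite Rabs_R0. split; nra.
Qed.

Lemma boundary_phiK_upper (K t X Y : R) :
  0 < Y -> 2 * Y < (1 + K) * t -> phi (- K) 1 t (X, Y) = 0 ->
  boundary (fun w => phi (- K) 1 t w < 0) (X, Y).
Proof.
  intros HY HYt H0.
  apply (boundary_of_segment _ X Y 0 (-1) (Rmin Y ((1 + K) * t - 2 * Y))); [apply Rmin_pos; lra|].
  intros d Hd. pose proof (Rmin_l Y ((1 + K) * t - 2 * Y)). pose proof (Rmin_r Y ((1 + K) * t - 2 * Y)).
  unfold phi in *; cbn [fst snd] in *.
  replace (X - d * 0) with X by ring. replace (X + d * 0) with X by ring.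
  replace (Y - d * -1) with (Y + d) by ring. replace (Y + d * -1) with (Y - d) by ring.
  rewrite Rabs_right in H0 by lra. rewrite !Rabs_right by lra.
  split; nra.
Qed.

(** * The intersection point Z *)

(* [rhoZ = |Z| = s^2 + y^2]: eliminating s and y from [(K-1) s = r - K], [2ty = r - 1] and
   [s^2 + y^2 = r] leaves [(r - 1) ((K-1)^2 (r-1) + 4t^2 (r - K^2)) = 0]. *)
Definition rhoZ (K t : R) : R :=
  (4 * t ^ 2 * K ^ 2 + (K - 1) ^ 2) / (4 * t ^ 2 + (K - 1) ^ 2).
Definition sZ (K t : R) : R := (rhoZ K t - K) / (K - 1).
Definition yZ (K t : R) : R := (rhoZ K t - 1) / (2 * t).
Definition Zpoint (K t : R) : C := Psq (sZ K t, yZ K t).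

Section Intersection.

Variables K t : R.
Hypothesis HK : 1 < K.
Hypothesis Ht : 2 * K <= t.

Let Hden : 0 < 4 * t ^ 2 + (K - 1) ^ 2.
Proof. nra. Qed.

Lemma rhoZ_eq : rhoZ K t * (4 * t ^ 2 + (K - 1) ^ 2) = 4 * t ^ 2 * K ^ 2 + (K - 1) ^ 2.
Proof. unfold rhoZ. field. lra. Qed.

Lemma rhoZ_bounds : K < rhoZ K t < K ^ 2.
Proof.
  pose proof rhoZ_eq.
  split; apply (Rmult_lt_reg_r (4 * t ^ 2 + (K - 1) ^ 2)); try lra.
  - assert (0 < (K - 1) * (4 * t ^ 2 * K - (K - 1) ^ 2)) by (apply Rmult_lt_0_compat; nra). nra.
  - assert (0 < (K - 1) ^ 2 * (K ^ 2 - 1)) by (apply Rmult_lt_0_compat; nra). nra.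
Qed.

Lemma sZ_eq : (K - 1) * sZ K t = rhoZ K t - K.
Proof. unfold sZ. field. lra. Qed.

Lemma yZ_eq : 2 * t * yZ K t = rhoZ K t - 1.
Proof. unfold yZ. field. lra. Qed.

Lemma sZ_bounds : 0 < sZ K t < K.
Proof. pose proof rhoZ_bounds. pose proof sZ_eq. split; nra. Qed.

Lemma yZ_bounds : 0 < yZ K t /\ 2 * t * yZ K t < K ^ 2.
Proof. pose proof rhoZ_bounds. pose proof yZ_eq. split; nra. Qed.

Lemma sZ_yZ_sq : sZ K t ^ 2 + yZ K t ^ 2 = rhoZ K t.
Proof.
  unfold sZ, yZ, rhoZ. field. repeat split; nra.
Qed.

Lemma phi_unit_sZ_yZ : phi (-1) 1 t (sZ K t, yZ K t) = 0.
Proof.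
  pose proof yZ_bounds. rewrite phi_unit_nonneg_im by lra.
  rewrite sZ_yZ_sq, yZ_eq. ring.
Qed.

Lemma sZ_yZ_cross : (K - sZ K t) * (sZ K t + 1) = yZ K t ^ 2.
Proof. pose proof sZ_yZ_sq. pose proof sZ_eq. nra. Qed.

Lemma sZ_yZ_unique (s y : R) :
  0 <= s -> 0 <= y -> phi (-1) 1 t (s, y) = 0 -> (K - s) * (s + 1) = y ^ 2 ->
  s = sZ K t /\ y = yZ K t.
Proof.
  intros Hs Hy H1 H2. rewrite phi_unit_nonneg_im in H1 by exact Hy.
  set (r := s ^ 2 + y ^ 2).
  assert (Ey : 2 * t * y = r - 1) by (unfold r; lra).
  assert (Es : (K - 1) * s = r - K) by (unfold r; lra).
  assert (Hr1 : r <> 1).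
  { intro Hr. assert (y = 0) by nra. subst y. assert (s = K) by nra. subst s. unfold r in Hr. nra. }
  assert (Hr : r = rhoZ K t).
  { assert (Hfac : (r - 1) * ((K - 1) ^ 2 * (r - 1) + 4 * t ^ 2 * (r - K ^ 2)) = 0).
    { assert (4 * t ^ 2 * y ^ 2 = (r - 1) ^ 2) by (rewrite <- Ey; ring).
      assert ((K - 1) ^ 2 * y ^ 2 = - (r - 1) * (r - K ^ 2)).
      { replace (y ^ 2) with (r - s ^ 2) by (unfold r; ring).
        replace ((K - 1) ^ 2 * (r - s ^ 2)) with ((K - 1) ^ 2 * r - ((K - 1) * s) ^ 2) by ring.
        rewrite Es. ring. }
      nra. }
    apply Rmult_integral in Hfac as [Hfac | Hfac]; [exfalso; apply Hr1; lra|].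
    apply (Rmult_eq_reg_r (4 * t ^ 2 + (K - 1) ^ 2)); [rewrite rhoZ_eq; lra | lra]. }
  split.
  - apply (Rmult_eq_reg_l (K - 1)); [rewrite sZ_eq; lra | lra].
  - apply (Rmult_eq_reg_l (2 * t)); [rewrite yZ_eq; lra | lra].
Qed.

Lemma common_zeros_cases (w : C) :
  phi_sq t w = 0 -> phi (- K) 1 t w = 0 ->
  w = Zpoint K t \/ w = Cconj (Zpoint K t) \/ w = RtoC 1.
Proof.
  intros H1 H2. destruct (Psq_nonneg_cases w) as [s [y [Hs [Hy Hw]]]].
  assert (E1 : phi (-1) 1 t (s, y) = 0).
  { rewrite <- phi_sq_Psq, <- H1. destruct Hw as [-> | ->]; [reflexivity | symmetry; apply phi_sq_Cconj]. }
  assert (E2 : phi (- K) 1 t (Psq (s, y)) = 0).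
  { rewrite <- H2. destruct Hw as [-> | ->]; [reflexivity | symmetry; apply phi_Cconj]. }
  rewrite phiK_Psq_factor, E1 in E2 by assumption.
  assert (Hprod : ((s - 1) ^ 2 + y ^ 2) * ((K - s) * (s + 1) - y ^ 2) = 0) by lra.
  apply Rmult_integral in Hprod as [H0 | H0].
  - pose proof (pow2_ge_0 (s - 1)). pose proof (pow2_ge_0 y).
    assert (s = 1 /\ y = 0) as [-> ->] by (split; nra).
    replace (Psq (1, 0)) with (RtoC 1) in Hw by (apply injective_projections; simpl; ring).
    right; right. destruct Hw as [-> | ->]; [reflexivity|].
    apply injective_projections; simpl; ring.
  - destruct (sZ_yZ_unique s y Hs Hy E1 ltac:(lra)) as [-> ->].
    destruct Hw as [-> | ->]; [left | right; left]; reflexivity.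
Qed.

Lemma phiK_Zpoint : phi (- K) 1 t (Zpoint K t) = 0.
Proof.
  pose proof sZ_bounds. pose proof yZ_bounds.
  unfold Zpoint. rewrite phiK_Psq_factor, phi_unit_sZ_yZ, sZ_yZ_cross by lra. ring.
Qed.

Lemma Zpoint_Im_bounds : 0 < snd (Zpoint K t) /\ 2 * snd (Zpoint K t) < (1 + K) * t.
Proof.
  pose proof sZ_bounds. pose proof yZ_bounds.
  unfold Zpoint. rewrite Psq_pair; cbn [snd]. split; [nra|].
  assert (2 * sZ K t * (2 * t * yZ K t) < 2 * K ^ 3) by nra.
  nra.
Qed.

Lemma common_boundary_iff (w : C) :
  boundary (fun u => phi_sq t u < 0) w /\ boundary (fun u => phi (- K) 1 t u < 0) w <->
  w = Zpoint K t \/ w = Cconj (Zpoint K t) \/ w = RtoC 1.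
Proof.
  split.
  - intros [B1 B2]. apply common_zeros_cases.
    + exact (boundary_sublevel_eq0 _ _ w (fun u => iff_refl _) (continuous_phi_sq t w) B1).
    + exact (boundary_sublevel_eq0 _ _ w (fun u => iff_refl _) (continuous_phi _ _ t w) B2).
  - pose proof sZ_bounds.
    assert (BZ1 : boundary (fun u => phi_sq t u < 0) (Zpoint K t))
      by (apply boundary_phi_sq_Psq; [lra | apply phi_unit_sZ_yZ]).
    assert (BZ2 : boundary (fun u => phi (- K) 1 t u < 0) (Zpoint K t)).
    { destruct Zpoint_Im_bounds. pose proof phiK_Zpoint.
      rewrite (surjective_pairing (Zpoint K t)) in *. now apply boundary_phiK_upper. }
    intros [-> | [-> | ->]]; split.
    + exact BZ1.
    + exact BZ2.
    + apply boundary_Cconj; [intro u; rewrite phi_sq_Cconj; reflexivity | exact BZ1].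
    + apply boundary_Cconj; [intro u; rewrite phi_Cconj; reflexivity | exact BZ2].
    + replace (RtoC 1) with (Psq (1, 0)) by (apply injective_projections; simpl; ring).
      apply boundary_phi_sq_Psq; [lra | unfold phi; cbn [fst snd]; rewrite Rabs_R0; ring].
    + apply boundary_phiK_one; exact HK.
Qed.

Lemma Zpoint_near_K2 :
  Cmod (Cminus (Zpoint K t) (RtoC (K ^ 2))) <= (2 * K + 1) * yZ K t ^ 2 + 2 * K * yZ K t.
Proof.
  pose proof sZ_bounds. pose proof yZ_bounds. pose proof sZ_yZ_cross.
  eapply Rle_trans; [apply Cmod_Psq_sub_real; lra|].
  rewrite Rabs_left1 by nra.
  assert (K - sZ K t <= yZ K t ^ 2) by nra.
  nra.
Qed.

End Intersection.

(** * Hausdorff convergence of Δ *)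

Section Hausdorff.

Variables K t eta : R.
Hypothesis HK : 1 < K.
Hypothesis Ht : 0 < t.
Hypothesis Heta : K ^ 2 <= 2 * t * eta.

Lemma Psq_delta_near_interval (s y : R) :
  0 <= s -> 0 <= y ->
  phi (- K) 1 t (Psq (s, y)) < 0 -> 0 <= phi (-1) 1 t (s, y) ->
  exists x, 1 <= x <= K ^ 2 /\ Cmod (Cminus (Psq (s, y)) (RtoC x)) <= 2 * eta ^ 2 + 2 * K * eta.
Proof.
  intros Hs Hy H2 H1.
  rewrite phiK_Psq_factor in H2 by assumption.
  assert (HG : y ^ 2 < (K - s) * (s + 1)).
  { pose proof (pow2_ge_0 (s - 1)). pose proof (pow2_ge_0 y).
    assert (0 <= (1 + K) * s * phi (-1) 1 t (s, y)) by (apply Rmult_le_pos; nra).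
    nra. }
  assert (HsK : s < K) by nra.
  rewrite phi_unit_nonneg_im in H1 by exact Hy.
  assert (Hy_eta : y <= eta) by nra.
  exists (Rmax 1 (s ^ 2 - y ^ 2)). split.
  - split; [apply Rmax_l | apply Rmax_lub; nra].
  - eapply Rle_trans; [apply Cmod_Psq_sub_real; assumption|].
    assert (Hsy : 2 * s * y <= 2 * K * eta) by nra.
    unfold Rmax. destruct (Rle_dec 1 (s ^ 2 - y ^ 2)).
    + rewrite Rminus_diag, Rabs_R0. nra.
    + rewrite Rabs_left by lra. nra.
Qed.

Lemma delta_point_near_interval (w : C) :
  phi (- K) 1 t w < 0 -> 0 <= phi_sq t w ->
  exists x, 1 <= x <= K ^ 2 /\ Cmod (Cminus w (RtoC x)) <= 2 * eta ^ 2 + 2 * K * eta.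
Proof.
  intros H2 H1. destruct (Psq_nonneg_cases w) as [s [y [Hs [Hy [-> | ->]]]]].
  - rewrite phi_sq_Psq in H1. exact (Psq_delta_near_interval s y Hs Hy H2 H1).
  - rewrite phi_Cconj in H2. rewrite phi_sq_Cconj, phi_sq_Psq in H1.
    destruct (Psq_delta_near_interval s y Hs Hy H2 H1) as [x [Hx Hd]].
    exists x. rewrite Cmod_Cconj_sub_real. split; assumption.
Qed.

Lemma interval_point_near_delta (x a : R) :
  1 <= x <= K ^ 2 -> 0 < a <= (K - 1) / 2 -> a <= 1 -> (1 + K) * K * eta ^ 2 < a ^ 3 ->
  exists w, phi (- K) 1 t w < 0 /\ 0 <= phi_sq t w /\
    Cmod (Cminus w (RtoC x)) <= 2 * K * a + eta ^ 2 + 2 * K * eta.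
Proof.
  intros Hx Ha Ha1 Heta_a.
  set (r := sqrt x).
  assert (Hr2 : r ^ 2 = x) by (apply pow2_sqrt; lra).
  assert (Hr : 1 <= r <= K).
  { split; [rewrite <- sqrt_1 | rewrite <- (sqrt_pow2 K) by lra]; apply sqrt_le_1_alt; lra. }
  set (s := Rmax (1 + a) (Rmin (K - a) r)).
  assert (Hs : 1 + a <= s <= K - a) by (split; [apply Rmax_l | apply Rmax_lub, Rmin_l; lra]).
  assert (Hsr : Rabs (s - r) <= a).
  { unfold s, Rmax, Rmin. destruct (Rle_dec (K - a) r), (Rle_dec (1 + a) _);
      apply Rabs_le; lra. }
  (* This puts [Psq (s, y)] just outside the image: [phi_sq t (Psq (s, y)) = y ^ 2]. *)
  set (y := (s ^ 2 - 1) / (2 * t)).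
  assert (Hy : 2 * t * y = s ^ 2 - 1) by (unfold y; field; lra).
  assert (Hy0 : 0 <= y) by nra.
  assert (Hy_eta : y <= eta).
  { assert (s ^ 2 < K ^ 2) by nra. apply Rmult_le_reg_l with (2 * t); lra. }
  assert (H1 : phi (-1) 1 t (s, y) = y ^ 2) by (rewrite phi_unit_nonneg_im by exact Hy0; lra).
  exists (Psq (s, y)). rewrite phi_sq_Psq, phiK_Psq_factor, H1 by lra.
  split; [|split; [apply pow2_ge_0|]].
  - assert (Ha3 : 0 < a ^ 3) by (apply pow_lt; lra).
    assert (HH : a ^ 2 <= (s - 1) ^ 2 + y ^ 2) by nra.
    assert (Heta_sq : eta ^ 2 < a).
    { assert (a ^ 3 <= a) by nra. assert (eta ^ 2 <= (1 + K) * K * eta ^ 2) by nra. lra. }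
    assert (Hy2 : y ^ 2 <= eta ^ 2) by (apply pow_incr; lra).
    assert (a * 2 <= (K - s) * (s + 1)) by (apply Rmult_le_compat; lra).
    assert (HG : a < (K - s) * (s + 1) - y ^ 2) by lra.
    assert (a ^ 3 < ((s - 1) ^ 2 + y ^ 2) * ((K - s) * (s + 1) - y ^ 2)).
    { apply Rle_lt_trans with (((s - 1) ^ 2 + y ^ 2) * a).
      - replace (a ^ 3) with (a ^ 2 * a) by ring. apply Rmult_le_compat_r; lra.
      - apply Rmult_lt_compat_l; [pose proof (pow_lt a 2); lra | exact HG]. }
    assert ((1 + K) * s * y ^ 2 <= (1 + K) * K * eta ^ 2)
      by (apply Rmult_le_compat;
          [apply Rmult_le_pos; lra | apply pow2_ge_0 | apply Rmult_le_compat_l; lra | exact Hy2]).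
    lra.
  - eapply Rle_trans; [apply Cmod_Psq_sub_real; lra|].
    assert (Rabs (s ^ 2 - x) <= 2 * K * a).
    { rewrite <- Hr2. replace (s ^ 2 - r ^ 2) with ((s - r) * (s + r)) by ring.
      rewrite Rabs_mult, (Rabs_right (s + r)) by lra.
      apply Rle_trans with (a * (2 * K)); [|lra].
      apply Rmult_le_compat; try apply Rabs_pos; lra. }
    assert (Rabs (s ^ 2 - y ^ 2 - x) <= Rabs (s ^ 2 - x) + y ^ 2).
    { replace (s ^ 2 - y ^ 2 - x) with ((s ^ 2 - x) + - (y ^ 2)) by ring.
      eapply Rle_trans; [apply Rabs_triang|].
      rewrite Rabs_Ropp, (Rabs_right (y ^ 2)) by (apply Rle_ge, pow2_ge_0). lra. }
    assert (y ^ 2 <= eta ^ 2) by (apply pow_incr; lra).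
    assert (s * y <= K * eta) by (apply Rmult_le_compat; lra).
    lra.
Qed.

End Hausdorff.

Lemma cot_lower_bound (th : R) : 0 < th <= 1 -> 1 <= 2 * th * cot th.
Proof.
  intro Hth.
  assert (Hs : 0 < sin th) by (apply sin_gt_0; pose proof PI2_1; lra).
  assert (Hs_th : sin th < th) by (apply sin_lt_x; lra).
  assert (Hc : 1 / 2 <= cos th).
  { replace th with (2 * (th / 2)) by field. rewrite cos_2a_sin.
    assert (0 < sin (th / 2)) by (apply sin_gt_0; pose proof PI2_1; lra).
    assert (sin (th / 2) < th / 2) by (apply sin_lt_x; lra). nra. }
  unfold cot. replace (2 * th * (cos th / sin th)) with (2 * th * cos th / sin th) by (field; lra).
  apply Rle_div_r; nra.
Qed.

Lemma cot_small_theta (K th : R) :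
  1 < K -> 0 < th < 1 / (4 * K) ->
  0 < th < PI / 2 /\ 2 * K <= cot th /\ 1 <= 2 * th * cot th.
Proof.
  intros HK Hth.
  assert (H4K : th * (4 * K) < 1) by (apply Rlt_div_r; lra).
  assert (Hcot : 1 <= 2 * th * cot th) by (apply cot_lower_bound; nra).
  pose proof PI2_1. repeat split; nra.
Qed.

Lemma common_boundary_theta (K th : R) (w : C) :
  1 < K -> 0 < th < 1 / (4 * K) ->
  boundary (image_set Psq (poincare_nbhd (-1) 1 th)) w /\ boundary (poincare_nbhd (- K) 1 th) w <->
  w = Zpoint K (cot th) \/ w = Cconj (Zpoint K (cot th)) \/ w = RtoC 1.
Proof.
  intros HK Hth. destruct (cot_small_theta K th HK Hth) as [Hpi [Ht _]].
  rewrite (boundary_iff _ _ w (fun u => image_nbhd_iff th u Hpi)).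
  rewrite (boundary_iff _ _ w (fun u => poincare_nbhd_iff (- K) 1 th u ltac:(lra) Hpi)).
  apply common_boundary_iff; assumption.
Qed.

Lemma Zpoint_limit (K : R) :
  1 < K -> forall eps, 0 < eps -> exists delta, 0 < delta /\
    forall th, 0 < th < Rmin delta (1 / (4 * K)) ->
      Cmod (Cminus (Zpoint K (cot th)) (RtoC (K ^ 2))) < eps.
Proof.
  intros HK eps Heps.
  assert (HK2 : 0 < K ^ 2) by nra.
  exists (Rmin (1 / K ^ 2) (eps / ((4 * K + 1) * K ^ 2))).
  split; [apply Rmin_pos; apply Rdiv_lt_0_compat; nra|].
  intros th [Hth0 Hth].
  assert (Hth1 : th < 1 / K ^ 2)
    by (eapply Rlt_le_trans; [apply Hth | eapply Rle_trans; [apply Rmin_l | apply Rmin_l]]).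
  assert (Hth2 : th < eps / ((4 * K + 1) * K ^ 2))
    by (eapply Rlt_le_trans; [apply Hth | eapply Rle_trans; [apply Rmin_l | apply Rmin_r]]).
  assert (Hth3 : th < 1 / (4 * K)) by (eapply Rlt_le_trans; [apply Hth | apply Rmin_r]).
  destruct (cot_small_theta K th HK ltac:(lra)) as [_ [Ht Hcot]].
  destruct (yZ_bounds K (cot th) HK Ht) as [Hy0 Hy1].
  assert (Hy : yZ K (cot th) <= K ^ 2 * th) by nra.
  assert (Heta1 : K ^ 2 * th < 1) by (rewrite Rmult_comm; apply Rlt_div_r; lra).
  assert (Heta : K ^ 2 * th * (4 * K + 1) < eps)
    by (replace (K ^ 2 * th * (4 * K + 1)) with (th * ((4 * K + 1) * K ^ 2)) by ring;
        apply Rlt_div_r; nra).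
  eapply Rle_lt_trans; [apply Zpoint_near_K2; lra|].
  set (y := yZ K (cot th)) in *.
  assert ((2 * K + 1) * y ^ 2 <= (2 * K + 1) * y) by (apply Rmult_le_compat_l; nra).
  assert ((4 * K + 1) * y <= (4 * K + 1) * (K ^ 2 * th)) by (apply Rmult_le_compat_l; lra).
  lra.
Qed.

Lemma DeltaKT_iff (K th : R) (w : C) :
  1 < K -> 0 < th < PI / 2 ->
  DeltaKT K th w <-> phi (- K) 1 (cot th) w < 0 /\ 0 <= phi_sq (cot th) w.
Proof.
  intros HK Hth. unfold DeltaKT.
  rewrite poincare_nbhd_iff, image_nbhd_iff by lra.
  split; intros [H1 H2]; split; lra.
Qed.

Lemma DeltaKT_interval_bounds (K th eta a : R) :
  1 < K -> 0 < th < 1 / (4 * K) -> K ^ 2 <= 2 * cot th * eta ->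
  0 < a <= (K - 1) / 2 -> a <= 1 -> (1 + K) * K * eta ^ 2 < a ^ 3 ->
  (forall w, DeltaKT K th w ->
     exists x, 1 <= x <= K ^ 2 /\ Cmod (Cminus w (RtoC x)) <= 2 * eta ^ 2 + 2 * K * eta) /\
  (forall x, 1 <= x <= K ^ 2 ->
     exists w, DeltaKT K th w /\ Cmod (Cminus w (RtoC x)) <= 2 * K * a + eta ^ 2 + 2 * K * eta).
Proof.
  intros HK Hth Heta Ha Ha1 Heta_a.
  destruct (cot_small_theta K th HK Hth) as [Hpi [Ht _]].
  split.
  - intros w Hw. rewrite DeltaKT_iff in Hw by assumption. destruct Hw as [H2 H1].
    exact (delta_point_near_interval K (cot th) eta HK ltac:(lra) Heta w H2 H1).
  - intros x Hx.
    destruct (interval_point_near_delta K (cot th) eta HK ltac:(lra) Heta x a Hx Ha Ha1 Heta_a)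
      as [w [H2 [H1 Hd]]].
    exists w. rewrite DeltaKT_iff by assumption. split; [split |]; assumption.
Qed.

Lemma DeltaKT_limit (K : R) :
  1 < K -> forall eps, 0 < eps -> exists delta, 0 < delta /\
    forall th, 0 < th < delta ->
      (forall w, DeltaKT K th w ->
         exists x, 1 <= x <= K ^ 2 /\ Cmod (Cminus w (RtoC x)) < eps) /\
      (forall x, 1 <= x <= K ^ 2 ->
         exists w, DeltaKT K th w /\ Cmod (Cminus w (RtoC x)) < eps).
Proof.
  intros HK eps Heps.
  set (a := Rmin ((K - 1) / 2) (Rmin 1 (eps / (4 * K)))).
  assert (Ha : 0 < a) by (apply Rmin_pos; [lra | apply Rmin_pos; [lra | apply Rdiv_lt_0_compat; lra]]).
  assert (Ha1 : a <= (K - 1) / 2) by apply Rmin_l.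
  assert (Ha2 : a <= 1) by (eapply Rle_trans; [apply Rmin_r | apply Rmin_l]).
  assert (Ha3 : a * (4 * K) <= eps)
    by (apply Rle_div_r; [lra | eapply Rle_trans; [apply Rmin_r | apply Rmin_r]]).
  set (c := 2 * K * (1 + K) * K ^ 2).
  assert (Hc : 0 < c) by (unfold c; nra).
  exists (Rmin (1 / (4 * K)) (a ^ 2 / c)).
  split; [apply Rmin_pos; apply Rdiv_lt_0_compat; nra|].
  intros th Hth.
  assert (Hth0 : th < 1 / (4 * K)) by (eapply Rlt_le_trans; [apply Hth | apply Rmin_l]).
  assert (Hthc : th < a ^ 2 / c) by (eapply Rlt_le_trans; [apply Hth | apply Rmin_r]).
  destruct (cot_small_theta K th HK ltac:(lra)) as [_ [_ Hcot]].
  set (eta := K ^ 2 * th).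
  assert (Heta : K ^ 2 <= 2 * cot th * eta) by (unfold eta; nra).
  assert (Heta0 : 0 < eta) by (unfold eta; apply Rmult_lt_0_compat; nra).
  assert (Heta_a : eta * (2 * K * (1 + K)) < a ^ 2)
    by (unfold eta; replace (K ^ 2 * th * (2 * K * (1 + K))) with (th * c) by (unfold c; ring);
        apply Rlt_div_r; lra).
  assert (Heta_lin : (2 + 2 * K) * eta < a).
  { assert (0 <= eta * (2 * (1 + K) * (K - 1))) by (apply Rmult_le_pos; nra).
    assert (a ^ 2 <= a) by nra. nra. }
  assert (Heta_cube : (1 + K) * K * eta ^ 2 < a ^ 3).
  { replace ((1 + K) * K * eta ^ 2) with (eta * (2 * K * (1 + K)) * (eta / 2)) by field.
    replace (a ^ 3) with (a ^ 2 * a) by ring.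
    apply Rmult_le_0_lt_compat; nra. }
  assert (Hsq : eta ^ 2 <= eta) by nra.
  destruct (DeltaKT_interval_bounds K th eta a HK ltac:(lra) Heta ltac:(lra) Ha2 Heta_cube)
    as [Hnear Hfar].
  split.
  - intros w Hw. destruct (Hnear w Hw) as [x [Hx Hd]]. exists x. split; [exact Hx | nra].
  - intros x Hx. destruct (Hfar x Hx) as [w [Hw Hd]]. exists w. split; [exact Hw | nra].
Qed.

Theorem mainTheorem6 (K : R) (HK : 1 < K) :
  exists theta0 : R, 0 < theta0 /\
  exists Z : R -> C,
    (* boundaries meet exactly in Z(K,theta) (upper half-plane), its conjugate,
       and the trivial common boundary point 1 = P(1) *)
    (forall theta, 0 < theta < theta0 ->
       0 < Im (Z theta) /\
       forall w : C,
         (boundary (image_set Psq (poincare_nbhd (-1) 1 theta)) w /\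
          boundary (poincare_nbhd (- K) 1 theta) w) <->
         (w = Z theta \/ w = Cconj (Z theta) \/ w = RtoC 1)) /\
    (* Z(K,theta) -> K^2 as theta -> 0+ *)
    (forall eps, 0 < eps -> exists delta, 0 < delta /\
       forall theta, 0 < theta < Rmin delta theta0 ->
         Cmod (Cminus (Z theta) (RtoC (K ^ 2))) < eps) /\
    (* Delta(K,theta) -> [1, K^2] in the Hausdorff sense as theta -> 0+ *)
    (forall eps, 0 < eps -> exists delta, 0 < delta /\
       forall theta, 0 < theta < delta ->
         (forall w, DeltaKT K theta w ->
            exists x, 1 <= x <= K ^ 2 /\ Cmod (Cminus w (RtoC x)) < eps) /\
         (forall x, 1 <= x <= K ^ 2 ->
            exists w, DeltaKT K theta w /\ Cmod (Cminus w (RtoC x)) < eps)).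
Proof.
  exists (1 / (4 * K)). split; [apply Rdiv_lt_0_compat; lra|].
  exists (fun th => Zpoint K (cot th)).
  split; [|split; [exact (Zpoint_limit K HK) | exact (DeltaKT_limit K HK)]].
  intros th Hth. split.
  - destruct (cot_small_theta K th HK Hth) as [_ [Ht _]].
    exact (proj1 (Zpoint_Im_bounds K (cot th) HK Ht)).
  - intro w. exact (common_boundary_theta K th w HK Hth).
Qed.
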